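(* Let $\theta$ be a comtrace alphabet. For all $D_1,D_2\in\mathsf{CDG}(\theta)$, the composition $D_1\circledcirc D_2$ is a cd-graph over $\theta$, i.e. $D_1\circledcirc D_2\in\mathsf{CDG}(\theta)$.
   Context: So-structures: $(X,\prec,\sqsubset)$ with (S1) $\neg(\alpha\sqsubset\alpha)$; (S2) $\alpha\prec\beta\Rightarrow\alpha\sqsubset\beta$; (S3) $\alpha\sqsubset\beta\sqsubset\gamma\wedge\alpha\neq\gamma\Rightarrow\alpha\sqsubset\gamma$; (S4) $(\alpha\sqsubset\beta\prec\gamma)\vee(\alpha\prec\beta\sqsubset\gamma)\Rightarrow\alpha\prec\gamma$. $\lozenge$-closure: $(X,R_1,R_2)^\lozenge:=(X,(R_1\cup R_2)^*\circ R_1\circ(R_1\cup R_2)^*,(R_1\cup R_2)^*\setminus\mathrm{id}_X)$ ($^*$ = reflexive transitive closure). Labeled relational structures are taken up to label-preserving isomorphism; $[\cdot]$ denotes the class. Comtrace alphabet: $\theta=(E,sim,ser)$, $E$ finite, $ser\subseteq sim\subseteq E\times E$, $sim$ irreflexive symmetric. Cd-graph over $\theta$: the class of a finite labeled relational structure $(X,\to,\dashrightarrow,\lambda)$, $\lambda:X\to E$, with $\to,\dashrightarrow$ irreflexive, $(X,\to,\dashrightarrow)^\lozenge$ an so-structure, and for all $\alpha\neq\beta$: (CD1) $(\lambda\alpha,\lambda\beta)\notin sim\Rightarrow\alpha\to\beta\vee\beta\to\alpha$; (CD2) $(\lambda\alpha,\lambda\beta)\notin ser\Rightarrow\alpha\to\beta\vee\beta\dashrightarrow\alpha$;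 (CD3) $\alpha\to\beta\Rightarrow(\lambda\alpha,\lambda\beta)\notin ser$; (CD4) $\alpha\dashrightarrow\beta\Rightarrow(\lambda\beta,\lambda\alpha)\notin ser$. $\mathsf{CDG}(\theta)$ is the set of these. Composition: for $D_i=[X_i,\to_i,\dashrightarrow_i,\lambda_i]$, $X_1,X_2$ disjoint, $D_1\circledcirc D_2:=[X_1\uplus X_2,\to,\dashrightarrow,\lambda_1\uplus\lambda_2]$ with $\to=\to_1\cup\to_2\cup\{(\alpha,\beta)\in X_1\times X_2:(\lambda\alpha,\lambda\beta)\notin ser\}$ and $\dashrightarrow=\dashrightarrow_1\cup\dashrightarrow_2\cup\{(\alpha,\beta)\in X_1\times X_2:(\lambda\beta,\lambda\alpha)\notin ser\}$. *)

From mathcomp Require Import all_boot.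
Set Implicit Arguments. Unset Strict Implicit. Unset Printing Implicit Defensive.

Definition comtrace_alphabet (E : finType) (sim ser : rel E) : Prop :=
  (forall a b, ser a b -> sim a b) /\ irreflexive sim /\ symmetric sim.

Definition so_structure (X : Type) (prec sq : X -> X -> Prop) : Prop :=
  (forall a, ~ sq a a) /\
  (forall a b, prec a b -> sq a b) /\
  (forall a b c, sq a b -> sq b c -> a <> c -> sq a c) /\
  (forall a b c, (sq a b /\ prec b c) \/ (prec a b /\ sq b c) -> prec a c).

Definition star_union (X : finType) (R1 R2 : rel X) : rel X :=
  connect [rel x y | R1 x y || R2 x y].

Definition diamond_prec (X : finType) (R1 R2 : rel X) (x y : X) : Prop :=
  exists z w, star_union R1 R2 x z /\ R1 z w /\ star_union R1 R2 w y.

Definition diamond_sq (X : finType) (R1 R2 : rel X) (x y : X) : Prop :=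
  star_union R1 R2 x y /\ x <> y.

Record lrs (E : Type) := LRS {
  carrier : finType;
  arr : rel carrier;
  darr : rel carrier;
  lab : carrier -> E }.

(* (a representative of) a cd-graph over theta = (E, sim, ser) *)
Definition is_cdg (E : finType) (sim ser : rel E) (D : lrs E) : Prop :=
  irreflexive (@arr E D) /\ irreflexive (@darr E D) /\
  so_structure (diamond_prec (@arr E D) (@darr E D))
               (diamond_sq (@arr E D) (@darr E D)) /\
  (forall a b : carrier D, a <> b ->
     (~~ sim (lab a) (lab b) -> arr a b \/ arr b a) /\
     (~~ ser (lab a) (lab b) -> arr a b \/ darr b a) /\
     (arr a b -> ~~ ser (lab a) (lab b)) /\
     (darr a b -> ~~ ser (lab b) (lab a))).

(* Composition D1 ⊚ D2; the disjoint union X1 ⊎ X2 is the sum type. *)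
Section Compose.
Variables (E : finType) (ser : rel E) (D1 D2 : lrs E).

Definition comp_lab (u : (carrier D1 + carrier D2)%type) : E :=
  match u with inl a => lab a | inr b => lab b end.

Definition comp_arr : rel (carrier D1 + carrier D2)%type :=
  fun u v => match u, v with
  | inl a, inl b => arr a b
  | inr a, inr b => arr a b
  | inl a, inr b => ~~ ser (lab a) (lab b)
  | inr _, inl _ => false
  end.

Definition comp_darr : rel (carrier D1 + carrier D2)%type :=
  fun u v => match u, v with
  | inl a, inl b => darr a b
  | inr a, inr b => darr a b
  | inl a, inr b => ~~ ser (lab b) (lab a)
  | inr _, inl _ => false
  end.

Definition compose : lrs E :=
  @LRS E (carrier D1 + carrier D2)%type comp_arr comp_darr comp_lab.
End Compose.

From mathcomp Require Import all_boot.

(* The lozenge closure of (X, R1, R2) is an so-structure exactly when its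
   first component is irreflexive, i.e. when no cycle of R1 ∪ R2 contains an
   R1-edge.  In D1 ⊚ D2 every new edge goes from X1 to X2, so a cycle of the
   composition stays inside X1 or inside X2 and is a cycle of D1 or D2.  The
   axioms CD1-CD4 for pairs inside one component are inherited; across the
   components they follow from the definition of the new edges and from
   ser ⊆ sim together with the symmetry of sim. *)

Lemma diamond_prec_star (X : finType) (R1 R2 : rel X) x y :
  diamond_prec R1 R2 x y -> star_union R1 R2 x y.
Proof.
move=> [z [w [Hxz [Hzw Hwy]]]].
apply: connect_trans Hxz _; apply: connect_trans Hwy.
by apply: connect1; rewrite /= Hzw.
Qed.

Lemma so_structure_diamond (X : finType) (R1 R2 : rel X) :
  (forall x, ~ diamond_prec R1 R2 x x) ->
  so_structure (diamond_prec R1 R2) (diamond_sq R1 R2).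
Proof.
move=> prec_irr; split; first by move=> a [_].
split.
  move=> a b Hab; split; first exact: diamond_prec_star.
  by move=> Eab; subst b; exact: prec_irr Hab.
split.
  by move=> a b c [Hab _] [Hbc _] Hac; split=> //; exact: connect_trans Hab Hbc.
move=> a b c [[[Hab _] [z [w [Hbz Hzw]]]] | [[z [w [Haz [Hzw Hwb]]]] [Hbc _]]].
  by exists z, w; split=> //; exact: connect_trans Hab Hbz.
by exists z, w; do 2!split=> //; exact: connect_trans Hwb Hbc.
Qed.

Lemma cdg_diamond_prec_irrefl {E : finType} {sim ser : rel E} {D : lrs E} :
  is_cdg sim ser D -> forall x, ~ diamond_prec (@arr E D) (@darr E D) x x.
Proof. by move=> [_ [_ [[_ [prec_sq _]] _]]] x /prec_sq [_]. Qed.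

Section SumConnect.
Variables (A B : finType) (e : rel (A + B)%type).
Hypothesis no_inr_inl : forall b a, ~~ e (inr b) (inl a).

Lemma connect_to_inl x a : connect e x (inl a) ->
  exists2 a0, x = inl a0 & connect [rel u v | e (inl u) (inl v)] a0 a.
Proof.
move=> /connectP [p]; elim: p x => [|y p IHp] x /=; first by move=> _ <-; exists a.
move=> /andP [Hxy Hp] /(IHp _ Hp) [a1 Ey Ha1]; subst y.
case: x Hxy => [a0 | b0] Hxy; last by rewrite (negbTE (no_inr_inl _ _)) in Hxy.
by exists a0 => //; apply: connect_trans Ha1; exact: connect1.
Qed.

Lemma connect_from_inr b y : connect e (inr b) y ->
  exists2 b0, y = inr b0 & connect [rel u v | e (inr u) (inr v)] b b0.
Proof.
move=> /connectP [p]; elim: p b => [|z p IHp] b /=; first by move=> _ ->; exists b.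
case: z => [a | b1] /andP [Hbz Hp]; first by rewrite (negbTE (no_inr_inl _ _)) in Hbz.
move=> /(IHp _ Hp) [b0 -> Hb0]; exists b0 => //.
by apply: connect_trans Hb0; exact: connect1.
Qed.

End SumConnect.

Arguments connect_to_inl {A B e} no_inr_inl {x a}.
Arguments connect_from_inr {A B e} no_inr_inl {b y}.

Section Composition.
Variables (E : finType) (ser : rel E) (D1 D2 : lrs E).

Local Notation arr12 := (@comp_arr E ser D1 D2).
Local Notation darr12 := (@comp_darr E ser D1 D2).
Local Notation step12 := [rel u v | arr12 u v || darr12 u v].

Lemma comp_no_inr_inl b a : ~~ step12 (inr b) (inl a).
Proof. by []. Qed.

Lemma comp_diamond_prec_inl a b : diamond_prec arr12 darr12 (inl a) (inl b) ->
  diamond_prec (@arr E D1) (@darr E D1) a b.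
Proof.
move=> [z [w [Hz [Hzw Hw]]]].
have [w1 Ew Hw1] := connect_to_inl (e := step12) comp_no_inr_inl Hw; subst w.
case: z Hz Hzw => [z1 | z2] Hz Hzw //.
have [_ [<-] Hz1] := connect_to_inl (e := step12) comp_no_inr_inl Hz.
by exists z1, w1.
Qed.

Lemma comp_diamond_prec_inr a b : diamond_prec arr12 darr12 (inr a) (inr b) ->
  diamond_prec (@arr E D2) (@darr E D2) a b.
Proof.
move=> [z [w [Hz [Hzw Hw]]]].
have [z2 Ez Hz2] := connect_from_inr (e := step12) comp_no_inr_inl Hz; subst z.
case: w Hw Hzw => [w1 | w2] Hw Hzw //.
have [_ [<-] Hw2] := connect_from_inr (e := step12) comp_no_inr_inl Hw.
by exists z2, w2.
Qed.

End Composition.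

Theorem mainTheorem16 (E : finType) (sim ser : rel E)
  (theta : comtrace_alphabet sim ser) (D1 D2 : lrs E) :
  is_cdg sim ser D1 -> is_cdg sim ser D2 -> is_cdg sim ser (compose ser D1 D2).
Proof.
move=> cdg1 cdg2.
have irr1 := cdg_diamond_prec_irrefl cdg1; have irr2 := cdg_diamond_prec_irrefl cdg2.
case: cdg1 => [arr1_irr [darr1_irr [_ cd1]]]; case: cdg2 => [arr2_irr [darr2_irr [_ cd2]]].
have [ser_sim [_ sim_sym]] := theta.
have nsim_nser x y : ~~ sim x y -> ~~ ser x y by apply: contra; exact: ser_sim.
split; first by case.
split; first by case.
split.
  apply: so_structure_diamond => -[a | a].
  - by move/comp_diamond_prec_inl; exact: irr1.
  - by move/comp_diamond_prec_inr; exact: irr2.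
move=> [a | a] [b | b] neq_ab /=.
- by apply: cd1 => Eab; apply: neq_ab; rewrite Eab.
- split; first by move/nsim_nser; left.
  by split; [left | split].
- split; first by rewrite sim_sym => /nsim_nser; right.
  by split; [right | split].
- by apply: cd2 => Eab; apply: neq_ab; rewrite Eab.
Qed.
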